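(* Let $R$ be an associative ring with identity and $a,b,c,d\in R$ such that both $a^{\|(b,c)}$ and $d^{\|(b,c)}$ exist. Then the following are equivalent: (i) $ad$ has a $(b,c)$-inverse and $(ad)^{\|(b,c)}=d^{\|(b,c)}a^{\|(b,c)}$; (ii) $d^{\|(b,c)}=d^{\|(b,c)}add^{\|(b,c)}a^{\|(b,c)}=d^{\|(b,c)}a^{\|(b,c)}add^{\|(b,c)}$; (iii) $a^{\|(b,c)}=a^{\|(b,c)}add^{\|(b,c)}a^{\|(b,c)}=d^{\|(b,c)}a^{\|(b,c)}ada^{\|(b,c)}$.
   Context: For $a,b,c\in R$, $a$ is $(b,c)$-invertible if there exists $y\in R$ with $y\in (bRy)\cap(yRc)$, $yab=b$ and $cay=c$; such $y$ is unique and denoted $a^{\|(b,c)}$. *)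

From HB Require Import structures.
From mathcomp Require Import all_boot all_order all_algebra.
Set Implicit Arguments. Unset Strict Implicit. Unset Printing Implicit Defensive.
Import GRing.Theory.
Local Open Scope ring_scope.

Definition bc_inverse (R : pzRingType) (a b c y : R) : Prop :=
  (exists r : R, y = b * r * y) /\ (exists s : R, y = y * s * c) /\
  y * a * b = b /\ c * a * y = c.

From HB Require Import structures.
From mathcomp Require Import all_boot all_order all_algebra.
From Stdlib Require Import Setoid.
Import GRing.Theory.
Local Open Scope ring_scope.

(* All three conditions are equivalent to the two "absorption" identities
   zy(ad)b = b and c(ad)zy = c, where y = a^{||(b,c)} and z = d^{||(b,c)}.
   For (i): zy lies in bRzy (as z does) and in zyRc (as y does), so the
   absorption identities are exactly what is missing for zy to be the
   (b,c)-inverse of ad.  For (ii) and (iii): if u is a (b,c)-inverse of any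
   element e, then u = uXw = wXu is equivalent to wXb = b and cXw = c,
   because b = ueb, c = ceu, u = bru and u = usc for some r, s. *)

Lemma bc_inverse_unique {R : pzRingType} (a b c y y' : R) :
  bc_inverse a b c y -> bc_inverse a b c y' -> y = y'.
Proof.
move=> [_ [[s Es] [Hb _]]] [[r' Er'] [_ [_ Hc']]].
have -> : y' = y * a * y'.
  by rewrite {1}Er' -{1}Hb -!mulrA [b * (r' * _)]mulrA -Er'.
by rewrite {1}Es -{1}Hc' !mulrA -Es.
Qed.

Lemma bc_inverse_uniqueE {R : pzRingType} (x b c w : R) :
  ((exists v, bc_inverse x b c v) /\ (forall v, bc_inverse x b c v -> v = w))
  <-> bc_inverse x b c w.
Proof.
split=> [[[v Hv] Hw] | Hw]; first by rewrite -(Hw v Hv).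
by split=> [|v Hv]; [exists w | exact: bc_inverse_unique Hv Hw].
Qed.

Lemma bc_inverse_mulE {R : pzRingType} (x : R) {b c u v r s : R} :
  u = b * r * u -> v = v * s * c ->
  bc_inverse x b c (u * v) <-> (u * v * x * b = b /\ c * x * (u * v) = c).
Proof.
move=> Eu Ev; split=> [[_ [_ //]] | [Hb Hc]].
split; [exists r | split; [exists s |]] => //.
- by rewrite {1}Eu !mulrA.
- by rewrite {1}Ev !mulrA.
Qed.

Lemma bc_inverse_absorbE {R : pzRingType} (x w : R) {e b c u : R} :
  bc_inverse e b c u ->
  (u = u * x * w /\ u * x * w = w * x * u) <-> (w * x * b = b /\ c * x * w = c).
Proof.
move=> [[r Er] [[s Es] [Hb Hc]]]; split=> [[E1 E2] | [Hwb Hcw]].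
- split.
  + by rewrite -{1}Hb !mulrA -E2 -E1 Hb.
  + by rewrite -{2}Hc E1 !mulrA Hc.
- have Eu : u = u * x * w by rewrite {1}Es -{1}Hcw !mulrA -Es.
  have Eu' : w * x * u = u by rewrite {1}Er !mulrA Hwb -Er.
  by rewrite -Eu Eu'.
Qed.

Theorem theorem4p4 (R : pzRingType) (a b c d y z : R)
  (Hy : bc_inverse a b c y) (Hz : bc_inverse d b c z) :
  let i := (exists w, bc_inverse (a * d) b c w) /\
           (forall w, bc_inverse (a * d) b c w -> w = z * y) in
  let ii := z = z * a * d * z * y /\ z * a * d * z * y = z * y * a * d * z in
  let iii := y = y * a * d * z * y /\ y * a * d * z * y = z * y * a * d * y in
  (i <-> ii) /\ (i <-> iii).
Proof.
move: (Hy) (Hz) => [_ [[s Es] _]] [[r Er] _] i ii iii.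
have iE := bc_inverse_uniqueE (a * d) b c (z * y).
have mulE := bc_inverse_mulE (a * d) Er Es.
have iiE := bc_inverse_absorbE (a * d) (z * y) Hz.
have iiiE := bc_inverse_absorbE (a * d) (z * y) Hy.
rewrite !mulrA in mulE iiE iiiE.
rewrite /i iE mulE.
by split; symmetry; [exact: iiE | exact: iiiE].
Qed.
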